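(* Let $R=\prod_{i=1}^nR_i$ be a direct product of rings $R_1,\ldots,R_n$. Then $R$ is a left localizable ring if and only if each of the rings $R_1,\ldots,R_n$ is a left localizable ring.
   Context: All rings are associative with $1$. A multiplicative subset $S$ of $R$ ($1\in S$, $0\notin S$, closed under multiplication) is a left Ore set if $Sr\cap Rs\neq\emptyset$ for all $r\in R$, $s\in S$. A left Ore set $S$ is a left denominator set if $rs=0$ ($r\in R$, $s\in S$) implies $tr=0$ for some $t\in S$. A ring $R$ is a left localizable ring if every nonzero element $r\in R$ lies in some left denominator set of $R$. *)

From HB Require Import structures.
From mathcomp Require Import all_boot all_order all_algebra.
Set Implicit Arguments. Unset Strict Implicit. Unset Printing Implicit Defensive.
Import GRing.Theory.
Local Open Scope ring_scope.

Section DirectProduct.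
Variables (n : nat) (R : 'I_n -> pzRingType).

Definition dprod_ring := {dffun forall i : 'I_n, R i}.

HB.instance Definition _ := Choice.on dprod_ring.

Definition dp_zero : dprod_ring := [ffun i => 0].
Definition dp_opp (x : dprod_ring) : dprod_ring := [ffun i => - x i].
Definition dp_add (x y : dprod_ring) : dprod_ring := [ffun i => x i + y i].
Definition dp_one : dprod_ring := [ffun i => 1].
Definition dp_mul (x y : dprod_ring) : dprod_ring := [ffun i => x i * y i].

Lemma dp_addA : associative dp_add.
Proof. by move=> x y z; apply/ffunP=> i; rewrite !ffunE addrA. Qed.
Lemma dp_addC : commutative dp_add.
Proof. by move=> x y; apply/ffunP=> i; rewrite !ffunE addrC. Qed.
Lemma dp_add0 : left_id dp_zero dp_add.
Proof. by move=> x; apply/ffunP=> i; rewrite !ffunE add0r. Qed.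
Lemma dp_addN : left_inverse dp_zero dp_opp dp_add.
Proof. by move=> x; apply/ffunP=> i; rewrite !ffunE addNr. Qed.

HB.instance Definition _ :=
  GRing.isZmodule.Build dprod_ring dp_addA dp_addC dp_add0 dp_addN.

Lemma dp_mulA : associative dp_mul.
Proof. by move=> x y z; apply/ffunP=> i; rewrite !ffunE mulrA. Qed.
Lemma dp_mul1 : left_id dp_one dp_mul.
Proof. by move=> x; apply/ffunP=> i; rewrite !ffunE mul1r. Qed.
Lemma dp_mulr1 : right_id dp_one dp_mul.
Proof. by move=> x; apply/ffunP=> i; rewrite !ffunE mulr1. Qed.
Lemma dp_mulDl : left_distributive dp_mul +%R.
Proof. by move=> x y z; apply/ffunP=> i; rewrite !ffunE mulrDl. Qed.
Lemma dp_mulDr : right_distributive dp_mul +%R.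
Proof. by move=> x y z; apply/ffunP=> i; rewrite !ffunE mulrDr. Qed.

HB.instance Definition _ :=
  GRing.Zmodule_isPzRing.Build dprod_ring dp_mulA dp_mul1 dp_mulr1 dp_mulDl dp_mulDr.

End DirectProduct.

Section Localizable.
Variable R : pzRingType.

Definition multiplicative_subset (S : R -> Prop) : Prop :=
  [/\ S 1, ~ S 0 & forall a b, S a -> S b -> S (a * b)].

Definition left_Ore_set (S : R -> Prop) : Prop :=
  multiplicative_subset S /\
  forall (r s : R), S s -> exists (s' r' : R), S s' /\ s' * r = r' * s.

Definition left_denominator_set (S : R -> Prop) : Prop :=
  left_Ore_set S /\
  forall (r s : R), S s -> r * s = 0 -> exists t : R, S t /\ t * r = 0.

Definition left_localizable : Prop :=
  forall r : R, r != 0 -> exists S : R -> Prop, left_denominator_set S /\ S r.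

End Localizable.

From HB Require Import structures.
From mathcomp Require Import all_boot all_order all_algebra.
Set Implicit Arguments. Unset Strict Implicit. Unset Printing Implicit Defensive.
Import GRing.Theory.
Local Open Scope ring_scope.

(* In a direct product every nonzero element has a nonzero coordinate, and the
   elements supported on a single coordinate i form a two-sided ideal whose
   multiplication is that of R_i.  Hence a left denominator set S of R_j pulls
   back along the j-th projection to the left denominator set {s | s_j \in S}
   of the product, all Ore and annihilator witnesses being supported on j.
   Conversely, a left denominator set of the product containing an element
   supported on i projects to a left denominator set of R_i: zero stays out
   because that element annihilates anything whose i-th coordinate vanishes. *)

Section DirectProductCoordinates.
Variables (n : nat) (R : 'I_n -> pzRingType).
Implicit Types (x y : dprod_ring R) (i k : 'I_n).

Lemma dprod_mulE x y i : (x * y) i = x i * y i.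
Proof. exact: ffunE. Qed.

Lemma dprod0E i : (0 : dprod_ring R) i = 0.
Proof. exact: ffunE. Qed.

Lemma dprod1E i : (1 : dprod_ring R) i = 1.
Proof. exact: ffunE. Qed.

Lemma dprod_neq0 x : x != 0 -> exists i, x i != 0.
Proof.
move=> x_neq0; apply/existsP; apply: contraNT x_neq0 => /existsPn x_eq0.
by apply/eqP/ffunP => i; rewrite dprod0E; apply/eqP/negPn/x_eq0.
Qed.

Definition dprod_single i (a : R i) : dprod_ring R :=
  [ffun k => if i =P k is ReflectT e then eq_rect i R a k e else 0].

Lemma dprod_single_id i (a : R i) : dprod_single a i = a.
Proof.
rewrite ffunE; case: (i =P i) => [e|//].
by rewrite (eq_irrelevance e (erefl i)).
Qed.

Lemma dprod_single_neq i k (a : R i) : k != i -> dprod_single a k = 0.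
Proof.
move=> k_neq_i; rewrite ffunE; case: (i =P k) => [e|//].
by rewrite e eqxx in k_neq_i.
Qed.

Lemma dprod_single0 i : dprod_single (0 : R i) = 0.
Proof.
apply/ffunP => k; rewrite dprod0E.
by case: (eqVneq k i) => [->|/dprod_single_neq->//]; rewrite dprod_single_id.
Qed.

Lemma dprod_single_eq0 i (a : R i) : (dprod_single a == 0) = (a == 0).
Proof.
apply/eqP/eqP => [a0|->]; last exact: dprod_single0.
by rewrite -[a]dprod_single_id a0 dprod0E.
Qed.

Lemma dprod_single_mull i (a : R i) x :
  dprod_single a * x = dprod_single (a * x i).
Proof.
apply/ffunP => k; rewrite dprod_mulE.
case: (eqVneq k i) => [->|k_neq_i]; first by rewrite !dprod_single_id.
by rewrite !dprod_single_neq // mul0r.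
Qed.

End DirectProductCoordinates.

Section CoordinateDenominatorSets.
Variables (n : nat) (R : 'I_n -> pzRingType).

Definition coord_preimage j (S : R j -> Prop) (s : dprod_ring R) : Prop := S (s j).

Definition coord_image i (S : dprod_ring R -> Prop) : R i -> Prop :=
  fun a => exists2 s, S s & s i = a.
Arguments coord_image : clear implicits.

Lemma coord_preimage_left_denominator_set j (S : R j -> Prop) :
  left_denominator_set S -> left_denominator_set (coord_preimage S).
Proof.
rewrite /coord_preimage; move=> [[[S1 S0 SM] S_ore] S_den].
split; [split; [split|]|].
- by rewrite dprod1E.
- by rewrite dprod0E.
- by move=> a b Sa Sb; rewrite dprod_mulE; apply: SM.
- move=> r s Ss; have [s' [r' [Ss' e]]] := S_ore (r j) (s j) Ss.
  exists (dprod_single s'), (dprod_single r'); split; first by rewrite dprod_single_id.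
  by rewrite !dprod_single_mull e.
- move=> r s Ss rs0.
  have [t [St tr0]] : exists t, S t /\ t * r j = 0.
    by apply: S_den Ss _; rewrite -dprod_mulE rs0 dprod0E.
  exists (dprod_single t); split; first by rewrite dprod_single_id.
  by rewrite dprod_single_mull tr0 dprod_single0.
Qed.

Lemma coord_image_left_denominator_set i (S : dprod_ring R -> Prop) (r : R i) :
  left_denominator_set S -> S (dprod_single r) ->
  left_denominator_set (coord_image i S).
Proof.
move=> [[[S1 S0 SM] S_ore] S_den] Sr.
have proj_mul (s t : dprod_ring R) : (s * t) i = s i * t i := dprod_mulE s t i.
split; [split; [split|]|].
- by exists 1; rewrite ?dprod1E.
- case=> s Ss si0.
  have [t [St tr0]] : exists t, S t /\ t * dprod_single r = 0.
    by apply: S_den Ss _; rewrite dprod_single_mull si0 mulr0 dprod_single0.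
  by apply: S0; rewrite -tr0; apply: SM.
- move=> _ _ [s Ss <-] [t St <-]; exists (s * t); [exact: SM | exact: proj_mul].
- move=> a _ [s Ss <-].
  have [s' [r' [Ss' e]]] := S_ore (dprod_single a) s Ss.
  exists (s' i), (r' i); split; first by exists s'.
  by rewrite -{1}[a](dprod_single_id a) -!proj_mul e.
- move=> a _ [s Ss <-] as0.
  have [t [St ta0]] : exists t, S t /\ t * dprod_single a = 0.
    by apply: S_den Ss _; rewrite dprod_single_mull as0 dprod_single0.
  exists (t i); split; first by exists t.
  by rewrite -[a](dprod_single_id a) -proj_mul ta0 dprod0E.
Qed.

End CoordinateDenominatorSets.

Arguments coord_image {n R} i S _.

Theorem theorem3p1 (n : nat) (R : 'I_n -> pzRingType) :
  left_localizable (dprod_ring R) <-> (forall i : 'I_n, left_localizable (R i)).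
Proof.
split=> [prod_loc i r r_neq0 | coord_loc r r_neq0].
- have [|S [S_den Sr]] := prod_loc (dprod_single r); first by rewrite dprod_single_eq0.
  exists (coord_image i S); split; first exact: coord_image_left_denominator_set Sr.
  by exists (dprod_single r); rewrite ?dprod_single_id.
- have [j rj_neq0] := dprod_neq0 r_neq0.
  have [S [S_den Srj]] := coord_loc j (r j) rj_neq0.
  by exists (coord_preimage S); split; first exact: coord_preimage_left_denominator_set.
Qed.
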